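(* Every tatami tiling of the $n\times n$ grid with exactly $n$ monomers has monomers in two corners of the grid, and these two corners are adjacent (i.e., they are the two endpoints of one side of the square).
   Context: A tatami tiling of the $n\times n$ grid is a tiling by monomers ($1\times1$ tiles) and dimers ($1\times2$ or $2\times1$ tiles) such that no point is a corner of four distinct tiles. *)

From mathcomp Require Import all_boot.
Set Implicit Arguments. Unset Strict Implicit. Unset Printing Implicit Defensive.

(* A cell of the n x n grid: (row, column), 0-indexed. *)
Definition cell (n : nat) := ('I_n * 'I_n)%type.

Definition adjacent (n : nat) (c d : cell n) : bool :=
  ((c.1 == d.1) && ((c.2.+1 == d.2 :> nat) || (d.2.+1 == c.2 :> nat))) ||
  ((c.2 == d.2) && ((c.1.+1 == d.1 :> nat) || (d.1.+1 == c.1 :> nat))).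

Definition is_monomer (n : nat) (A : {set cell n}) : bool := #|A| == 1.

Definition is_dimer (n : nat) (A : {set cell n}) : bool :=
  [exists c, exists d, adjacent c d && (A == [set c; d])].

Definition md_tiling (n : nat) (T : {set {set cell n}}) : bool :=
  partition T [set: cell n] &&
  [forall A in T, is_monomer A || is_dimer A].

(* Tatami condition: no grid point is a corner of four distinct tiles.
   Only interior grid points (i, j) with 1 <= i, j <= n-1 touch four cells;
   these are (i-1,j-1), (i-1,j), (i,j-1), (i,j).  Four distinct tiles meet
   at that point iff these four cells lie in pairwise distinct tiles. *)
Definition tatami (n : nat) (T : {set {set cell n}}) : Prop :=
  forall (a b c d : cell n),
    (a.1.+1 = c.1 :> nat) -> (a.2.+1 = b.2 :> nat) ->
    b.1 = a.1 -> c.2 = a.2 -> d.1 = c.1 -> d.2 = b.2 ->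
    ~~ uniq [:: pblock T a; pblock T b; pblock T c; pblock T d].

Definition tatami_tiling (n : nat) (T : {set {set cell n}}) : Prop :=
  md_tiling T /\ tatami T.

Definition num_monomers (n : nat) (T : {set {set cell n}}) : nat :=
  #|[set A in T | is_monomer A]|.

Definition corner (n : nat) (c : cell n) : bool :=
  ((c.1 == 0 :> nat) || (c.1 == n.-1 :> nat)) &&
  ((c.2 == 0 :> nat) || (c.2 == n.-1 :> nat)).

From mathcomp Require Import all_boot zify.
Set Implicit Arguments. Unset Strict Implicit. Unset Printing Implicit Defensive.

(* Counting cells gives n^2 = M + 2D (M monomers, D dimers).  By the tatami
   condition each of the (n-1)^2 interior grid points lies on the middle side
   of some dimer; a dimer has one middle side, which carries at most two
   interior points, and only one if the dimer lies along the boundary.  With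
   M = n this leaves at most n - 1 dimers along the boundary.  On the other
   hand, the boundary sides split into n - 1 families of four, indexed by
   k + l = n - 2, and every family contains the middle side of a dimer: this
   is proved by induction on the size of a square, the tatami condition next
   to four cut boundary points forcing a cut rim on a smaller square.  So each
   family contains exactly one such side; for k = 0 and k = n - 2 this puts a
   monomer in a corner of each diagonal, and any corner of one diagonal is
   adjacent to both corners of the other. *)

Definition hjoin (R : rel (nat * nat)) (i j : nat) : bool := R (i, j) (i, j.+1).
Definition vjoin (R : rel (nat * nat)) (i j : nat) : bool := R (i, j) (i.+1, j).

(* Joins across four sides on the boundary of the square
   [a, a + k + l + 2) x [b, b + k + l + 2): the left and top ones at offset k,
   the right and bottom ones at offset l. *)
Definition rim_joins (R : rel (nat * nat)) (a b k l : nat) : nat :=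
  vjoin R (a + k) b + hjoin R a (b + k) +
  vjoin R (a + l) (b + (k + l).+1) + hjoin R (a + (k + l).+1) (b + l).

Lemma rim_step_choice (t1 t2 t3 l1 l2 l3 r1 r2 r3 b1 b2 b3 : nat) :
  t1 + t2 + t3 <= 1 -> l1 + l2 + l3 <= 1 -> r1 + r2 + r3 <= 1 -> b1 + b2 + b3 <= 1 ->
  0 < r1 + b1 -> 0 < l3 + t3 -> 0 < t1 + r3 -> 0 < l1 + b3 -> 0 < t2 + l2 + r2 + b2 -> False.
Proof. lia. Qed.

Section Rim.

Variables (R : rel (nat * nat)) (n : nat).
Hypothesis R_sym : symmetric R.
Hypothesis R_partner : forall c d e, c != d -> c != e -> R c d -> R c e -> d = e.
Hypothesis R_tatami : forall i j, i.+1 < n -> j.+1 < n ->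
  0 < hjoin R i j + vjoin R i j + vjoin R i j.+1 + hjoin R i.+1 j.

Lemma count_partners_le1 c s : uniq s -> c \notin s -> count (R c) s <= 1.
Proof.
elim: s => //= d s IHs /andP [ds uniq_s]; rewrite inE negb_or => /andP [cd cs].
case Rcd: (R c d); last exact: IHs.
suff -> : count (R c) s = 0 by [].
apply/eqP; rewrite -leqn0 leqNgt -has_count; apply/hasP => -[e es Rce].
have ce : c != e by apply: contraNneq cs => ->.
by move: ds; rewrite (R_partner cd ce Rcd Rce) es.
Qed.

Lemma joins_around_le1 i j :
  vjoin R i j.+1 + hjoin R i.+1 j + hjoin R i.+1 j.+1 + vjoin R i.+1 j.+1 <= 1.
Proof.
have := @count_partners_le1 (i.+1, j.+1) [:: (i, j.+1); (i.+1, j); (i.+1, j.+2); (i.+2, j.+1)].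
rewrite /vjoin /hjoin /= !inE !xpair_eqE (R_sym (i, j.+1)) (R_sym (i.+1, j)).
rewrite !addn0 !addnA; apply; lia.
Qed.

(* Joins are compared syntactically by [lia], hence the normalisation of their
   indices; each join is then abstracted by a natural number at most 1, since
   [lia] would otherwise case-split on every boolean. *)
Ltac lia_joins :=
  repeat match goal with H : context [nat_of_bool _] |- _ => clear H end;
  rewrite /rim_joins ?addnS ?addSn ?addnA ?addn0 ?add0n;
  repeat match goal with |- context [nat_of_bool ?b] =>
    have := leq_b1 b; generalize (nat_of_bool b) => ? end;
  lia.

Lemma rim_joins_pos k l a b :
  a + (k + l).+2 <= n -> b + (k + l).+2 <= n -> 0 < rim_joins R a b k l.
Proof.
move: {2}(k + l) (leqnn (k + l)) => s; elim: s k l a b => [|s IHs] k l a b.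
  case: k l => [|?] [|?] //= _ an bn.
  by have := @R_tatami a b; lia_joins.
case: k l => [|k] [|l] kl an bn.
- by have := @R_tatami a b; lia_joins.
- have sq := @R_tatami a b.
  have ar := joins_around_le1 a b.
  have IH := IHs 0 l a.+1 b.+1.
  by move: sq ar IH; lia_joins.
- have sq := @R_tatami a (b + k.+1).
  have ar := joins_around_le1 a (b + k).
  have IH := IHs k 0 a.+1 b.
  by move: sq ar IH; lia_joins.
rewrite lt0n; apply/negP => /eqP rim0.
have top : hjoin R a.+1 (b + k) + hjoin R a.+1 (b + k).+1 + hjoin R a.+1 (b + k).+2 <= 1.
  have := @R_tatami a (b + k.+1); have := joins_around_le1 a (b + k).
  by have := joins_around_le1 a (b + k).+1; move: rim0; lia_joins.
have left : vjoin R (a + k) b.+1 + vjoin R (a + k).+1 b.+1 + vjoin R (a + k).+2 b.+1 <= 1.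
  have := @R_tatami (a + k.+1) b; have := joins_around_le1 (a + k) b.
  by have := joins_around_le1 (a + k).+1 b; move: rim0; lia_joins.
have right : vjoin R (a + l) (b + k + l).+2 + vjoin R (a + l).+1 (b + k + l).+2 +
             vjoin R (a + l).+2 (b + k + l).+2 <= 1.
  have := @R_tatami (a + l.+1) (b + (k + l).+2).
  have := joins_around_le1 (a + l) (b + k + l).+1.
  by have := joins_around_le1 (a + l).+1 (b + k + l).+1; move: rim0; lia_joins.
have bottom : hjoin R (a + k + l).+2 (b + l) + hjoin R (a + k + l).+2 (b + l).+1 +
              hjoin R (a + k + l).+2 (b + l).+2 <= 1.
  have := @R_tatami (a + (k + l).+2) (b + l.+1).
  have := joins_around_le1 (a + k + l).+1 (b + l).
  by have := joins_around_le1 (a + k + l).+1 (b + l).+1; move: rim0; lia_joins.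
(* The five alternatives are the rims of the four squares of side one less
   inside the square and of the square of side two less at its centre. *)
apply: (rim_step_choice top left right bottom); move: rim0.
- by have := IHs k.+1 l a b; lia_joins.
- by have := IHs k.+1 l a.+1 b.+1; lia_joins.
- by have := IHs k l.+1 a.+1 b; lia_joins.
- by have := IHs k l.+1 a b.+1; lia_joins.
- by have := IHs k l a.+1 b.+1; lia_joins.
Qed.
End Rim.

(* The left and upper neighbours are guarded since [0.-1 = 0]. *)
Definition neighbour_sum (f : pred (nat * nat)) (c : nat * nat) : nat :=
  f (c.1, c.2.+1) + f (c.1.+1, c.2) +
  (0 < c.2) && f (c.1, c.2.-1) + (0 < c.1) && f (c.1.-1, c.2).

Lemma eq_neighbour_sum f g c :
  {in predC1 c, f =1 g} -> neighbour_sum f c = neighbour_sum g c.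
Proof.
case: c => i j fg; have fgE p : p != (i, j) -> f p = g p by move=> ?; apply: fg.
by case: i j fgE {fg} => [|i] [|j] fgE; rewrite /neighbour_sum /= !fgE // ?xpair_eqE; lia.
Qed.

Lemma neighbour_sum_joins (R : rel (nat * nat)) c : symmetric R ->
  neighbour_sum (R c) c = hjoin R c.1 c.2 + vjoin R c.1 c.2 +
    (0 < c.2) && hjoin R c.1 c.2.-1 + (0 < c.1) && vjoin R c.1.-1 c.2.
Proof.
case: c => i j R_sym; rewrite /neighbour_sum /hjoin /vjoin /=; congr (_ + _ + _ + _).
  by case: j => //= j; rewrite R_sym.
by case: i => //= i; rewrite R_sym.
Qed.

Definition coord n (a : cell n) : nat * nat := (nat_of_ord a.1, nat_of_ord a.2).

Lemma coord_inj n : injective (@coord n).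
Proof. by move=> [a1 a2] [b1 b2] [] /val_inj -> /val_inj ->. Qed.

Lemma adjacent_sym n : symmetric (@adjacent n).
Proof.
move=> c d; rewrite /adjacent (eq_sym c.1) (eq_sym c.2).
by rewrite (orbC (c.2.+1 == _ :> nat)) (orbC (c.1.+1 == _ :> nat)).
Qed.

Lemma neighbour_sum_adjacent n (a b : cell n) :
  adjacent a b -> neighbour_sum (pred1 (coord b)) (coord a) = 1.
Proof.
case: a b => [[i ?] [j ?]] [[i' ?] [j' ?]].
rewrite /adjacent /neighbour_sum /coord /= -!val_eqE /= !xpair_eqE => adj.
have {adj} : (i = i' /\ (j.+1 = j' \/ j'.+1 = j)) \/ (j = j' /\ (i.+1 = i' \/ i'.+1 = i)).
  by case/orP: adj => /andP [/eqP -> /orP [] /eqP ->]; tauto.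
by case: (ltnP 0 i); case: (ltnP 0 j) => /=; do ![case: eqP => ? /=]; lia.
Qed.

Section Tiling.

Variables (n : nat) (T : {set {set cell n}}).

(* Cells are read as lattice points, so that squares anywhere in the grid are
   handled uniformly; points outside the grid are related to nothing. *)
Definition same_tile : rel (nat * nat) := fun c d =>
  [exists a, exists b, [&& coord a == c, coord b == d & pblock T a == pblock T b]].

Lemma same_tile_coord a b : same_tile (coord a) (coord b) = (pblock T a == pblock T b).
Proof.
apply/existsP/idP => [[a' /existsP [b' /and3P [/eqP /coord_inj -> /eqP /coord_inj -> //]]]|].
by exists a; apply/existsP; exists b; rewrite !eqxx.
Qed.

Lemma same_tileP c d : same_tile c d ->
  exists a b, [/\ c = coord a, d = coord b & pblock T a = pblock T b].
Proof. by case/existsP => a /existsP [b /and3P [/eqP <- /eqP <- /eqP]]; exists a, b. Qed.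

Lemma same_tile_sym : symmetric same_tile.
Proof.
suff imp c d : same_tile c d -> same_tile d c by move=> c d; apply/idP/idP; apply: imp.
by move=> /same_tileP [a [b [-> -> ab]]]; rewrite same_tile_coord ab.
Qed.

Lemma hjoin_out i j : n <= j.+1 -> hjoin same_tile i j = false.
Proof.
move=> nj; rewrite /hjoin; apply/negbTE/negP => /same_tileP [a [b [_ /(congr1 snd) /= jb _]]].
by move: (ltn_ord b.2); rewrite -jb ltnNge nj.
Qed.

Lemma vjoin_out i j : n <= i.+1 -> vjoin same_tile i j = false.
Proof.
move=> ni; rewrite /vjoin; apply/negbTE/negP => /same_tileP [a [b [_ /(congr1 fst) /= ib _]]].
by move: (ltn_ord b.1); rewrite -ib ltnNge ni.
Qed.

Hypothesis T_tiling : md_tiling T.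

Let T_partition : partition T [set: cell n].
Proof. by case/andP: T_tiling. Qed.

Let T_cover : cover T = [set: cell n].
Proof. by case/and3P: T_partition => /eqP. Qed.

Let tile_shape A : A \in T -> is_monomer A || is_dimer A.
Proof. by case/andP: T_tiling => _ /forall_inP; apply. Qed.

Lemma mem_pblock_self a : a \in pblock T a.
Proof. by rewrite mem_pblock T_cover inE. Qed.

Lemma pblock_tile a : pblock T a \in T.
Proof. by apply: pblock_mem; rewrite T_cover inE. Qed.

Lemma pblock_of_tile A a : A \in T -> a \in A -> pblock T a = A.
Proof. by apply: def_pblock; case/and3P: T_partition. Qed.

Lemma pblock_pair a b : a != b -> pblock T a = pblock T b ->
  adjacent a b /\ pblock T a = [set a; b].
Proof.
move=> ab eab; have ia := mem_pblock_self a; have ib := mem_pblock_self b.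
rewrite -eab in ib; case/orP: (tile_shape (pblock_tile a)).
  case/cards1P => x ex; move: ia ib; rewrite ex !inE => /eqP ea /eqP eb.
  by rewrite ea eb eqxx in ab.
case/existsP => x /existsP [y /andP [xy /eqP exy]].
move: ia ib ab; rewrite exy !inE.
case/orP=> /eqP -> /orP [] /eqP ->; rewrite ?eqxx // => _.
by rewrite setUC adjacent_sym.
Qed.

Lemma same_tile_partner c d e :
  c != d -> c != e -> same_tile c d -> same_tile c e -> d = e.
Proof.
move=> cd ce /same_tileP [a [b [ca db eab]]] /same_tileP [a' [b' [ca' eb' eab']]].
subst c d e; move/coord_inj: ca' => aa'; subst a'.
have ab : a != b by apply: contraNneq cd => ->.
have [_ pab] := pblock_pair ab eab.
have : b' \in pblock T a by rewrite eab' mem_pblock_self.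
by rewrite pab !inE => /orP [/eqP ba | /eqP ->] //; rewrite ba eqxx in ce.
Qed.

Lemma pblock_diagonal_neq (a b : cell n) :
  a.1 != b.1 :> nat -> a.2 != b.2 :> nat -> pblock T a != pblock T b.
Proof.
move=> ab1 ab2; apply/eqP => eab.
have ab : a != b by apply: contraNneq ab1 => ->.
by have [+ _] := pblock_pair ab eab; rewrite /adjacent -!val_eqE (negbTE ab1) (negbTE ab2).
Qed.

Lemma same_tile_tatami : tatami T -> forall i j, i.+1 < n -> j.+1 < n ->
  0 < hjoin same_tile i j + vjoin same_tile i j + vjoin same_tile i j.+1 + hjoin same_tile i.+1 j.
Proof.
move=> tat i j i1 j1.
pose a : cell n := (Ordinal (ltnW i1), Ordinal (ltnW j1)).
pose b : cell n := (Ordinal (ltnW i1), Ordinal j1).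
pose c : cell n := (Ordinal i1, Ordinal (ltnW j1)).
pose d : cell n := (Ordinal i1, Ordinal j1).
have := tat a b c d erefl erefl erefl erefl erefl erefl.
have ad : pblock T a != pblock T d by apply: pblock_diagonal_neq; rewrite /= neq_ltn ltnSn.
have bc : pblock T b != pblock T c.
  by apply: pblock_diagonal_neq; rewrite /= neq_ltn ltnSn ?orbT.
rewrite /hjoin /vjoin -[(i, j)]/(coord a) -[(i, j.+1)]/(coord b).
rewrite -[(i.+1, j)]/(coord c) -[(i.+1, j.+1)]/(coord d) !same_tile_coord.
move: ad bc; rewrite /= !inE.
by do 6!case: eqP => //=.
Qed.

Lemma tile_incidence (a : cell n) : ([set a] \in T) +
  (hjoin same_tile a.1 a.2 + vjoin same_tile a.1 a.2 +
   (0 < a.2) && hjoin same_tile a.1 a.2.-1 + (0 < a.1) && vjoin same_tile a.1.-1 a.2) = 1.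
Proof.
rewrite -[_ + _ + _ + _](neighbour_sum_joins (coord a) same_tile_sym).
case: (pickP [pred b | (b != a) && (pblock T b == pblock T a)]) => [b /andP [ba /eqP eba] | alone].
  have ab : a != b by rewrite eq_sym.
  have [adj pab] := pblock_pair ab (esym eba).
  have -> : ([set a] \in T) = false.
    apply/negP => Ta; move: (mem_pblock_self b).
    by rewrite eba (pblock_of_tile Ta (set11 a)) inE (negbTE ba).
  rewrite add0n -(neighbour_sum_adjacent adj); apply: eq_neighbour_sum => p; rewrite inE => pa.
  apply/idP/eqP => [/same_tileP [a' [b' [/coord_inj aa' pb eab']]] | ->].
    subst a' p; have : b' \in pblock T a by rewrite eab' mem_pblock_self.
    by rewrite pab !inE => /orP [/eqP b'a | /eqP ->] //; rewrite b'a eqxx in pa.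
  by rewrite same_tile_coord eba.
have -> : [set a] \in T.
  suff <- : pblock T a = [set a] by apply: pblock_tile.
  apply/setP => e; rewrite inE; apply/idP/eqP => [ea | ->]; last exact: mem_pblock_self.
  by have := alone e; rewrite /= (pblock_of_tile (pblock_tile a) ea) eqxx andbT => /negbFE/eqP.
rewrite (@eq_neighbour_sum _ pred0) /neighbour_sum /= ?andbF // => p; rewrite inE => pa.
apply/negbTE/negP => /same_tileP [a' [b' [/coord_inj aa' pb eab']]].
subst a' p; have := alone b'; rewrite /= -eab' eqxx andbT => /negbFE/eqP ba.
by rewrite ba eqxx in pa.
Qed.
End Tiling.

Lemma num_monomersE n (T : {set {set cell n}}) :
  num_monomers T = \sum_(a : cell n) ([set a] \in T).
Proof.
rewrite /num_monomers.
have -> : [set A in T | is_monomer A] = [set [set a] | a in [pred a | [set a] \in T]].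
  apply/setP => A; rewrite !inE /is_monomer; apply/andP/imsetP => [[TA /cards1P [a Aa]]|[a]].
    by exists a; rewrite // inE -Aa.
  by rewrite inE => Ta ->; rewrite cards1.
rewrite card_imset; last exact: set1_inj.
by rewrite -sum1_card big_mkcond; apply: eq_bigr => a _; rewrite inE; case: ifP.
Qed.

Section Counting.

Variables (m : nat) (T : {set {set cell m.+1}}).
Local Notation R := (same_tile T).

Definition row_joins i := \sum_(j < m.+1) hjoin R i j.
Definition col_joins j := \sum_(i < m.+1) vjoin R i j.
Definition hjoins := \sum_(i < m.+1) row_joins i.
Definition vjoins := \sum_(j < m.+1) col_joins j.

Lemma row_joins_trunc i : \sum_(j < m) hjoin R i j = row_joins i.
Proof. by rewrite /row_joins big_ord_recr /= hjoin_out ?addn0. Qed.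

Lemma col_joins_trunc j : \sum_(i < m) vjoin R i j = col_joins j.
Proof. by rewrite /col_joins big_ord_recr /= vjoin_out ?addn0. Qed.

Lemma rim_joins_sum : \sum_(k < m) rim_joins R 0 0 k (m - k.+1) =
  row_joins 0 + row_joins m + col_joins 0 + col_joins m.
Proof.
have rim_k (k : 'I_m) : rim_joins R 0 0 k (m - k.+1) =
    vjoin R k 0 + hjoin R 0 k + vjoin R (rev_ord k) m + hjoin R m (rev_ord k).
  by rewrite /rim_joins !add0n (_ : (k + (m - k.+1)).+1 = m) //; have := ltn_ord k; lia.
rewrite (eq_bigr _ (fun k _ => rim_k k)) !big_split /= row_joins_trunc col_joins_trunc.
rewrite -(row_joins_trunc m) -(col_joins_trunc m).
rewrite [\sum_(k < m) vjoin R k m](reindex_inj rev_ord_inj).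
rewrite [\sum_(k < m) hjoin R m k](reindex_inj rev_ord_inj) /=.
lia.
Qed.

Hypothesis T_tiling : md_tiling T.

Lemma card_cells_decomp : m.+1 * m.+1 = num_monomers T + 2 * hjoins + 2 * vjoins.
Proof.
have <- : \sum_(a : cell m.+1) 1 = m.+1 * m.+1 by rewrite sum1_card card_prod card_ord.
rewrite -(eq_bigr _ (fun a _ => tile_incidence T_tiling a)) !big_split /= -num_monomersE.
have -> : \sum_(a : cell m.+1) hjoin R a.1 a.2 = hjoins.
  by rewrite /hjoins /row_joins pair_bigA.
have -> : \sum_(a : cell m.+1) vjoin R a.1 a.2 = vjoins.
  by rewrite /vjoins /col_joins exchange_big pair_bigA.
have -> : \sum_(a : cell m.+1) (0 < a.2) && hjoin R a.1 a.2.-1 = hjoins.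
  transitivity (\sum_(i < m.+1) \sum_(j < m.+1) (0 < j) && hjoin R i j.-1).
    by rewrite pair_bigA.
  by apply: eq_bigr => i _; rewrite big_ord_recl add0n -row_joins_trunc.
have -> : \sum_(a : cell m.+1) (0 < a.1) && vjoin R a.1.-1 a.2 = vjoins.
  transitivity (\sum_(i < m.+1) \sum_(j < m.+1) (0 < i) && vjoin R i.-1 j).
    by rewrite pair_bigA.
  rewrite /vjoins exchange_big; apply: eq_bigr => j _.
  by rewrite big_ord_recl /= add0n -col_joins_trunc.
lia.
Qed.

Lemma tatami_joins_lb : tatami T ->
  m * m + row_joins 0 + row_joins m + col_joins 0 + col_joins m <= 2 * hjoins + 2 * vjoins.
Proof.
move=> tat.
have squares : m * m <= \sum_(i < m) \sum_(j < m)
    (hjoin R i j + vjoin R i j + vjoin R i j.+1 + hjoin R i.+1 j).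
  have -> : m * m = \sum_(i < m) \sum_(j < m) 1.
    by rewrite big_const_ord iter_addn_0 big_const_ord iter_addn_0 mul1n.
  apply: leq_sum => i _; apply: leq_sum => j _.
  by apply: same_tile_tatami; rewrite // ltnS ltn_ord.
move: squares; under eq_bigr => i _ do rewrite !big_split /=.
rewrite !big_split /=.
have -> : \sum_(i < m) \sum_(j < m) hjoin R i j = \sum_(i < m) row_joins i.
  by apply: eq_bigr => i _; rewrite row_joins_trunc.
have -> : \sum_(i < m) \sum_(j < m) hjoin R i.+1 j = \sum_(i < m) row_joins i.+1.
  by apply: eq_bigr => i _; rewrite row_joins_trunc.
have -> : \sum_(i < m) \sum_(j < m) vjoin R i j = \sum_(j < m) col_joins j.
  by rewrite exchange_big; apply: eq_bigr => j _; rewrite col_joins_trunc.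
have -> : \sum_(i < m) \sum_(j < m) vjoin R i j.+1 = \sum_(j < m) col_joins j.+1.
  by rewrite exchange_big; apply: eq_bigr => j _; rewrite col_joins_trunc.
have rows_r : hjoins = \sum_(i < m) row_joins i + row_joins m by rewrite /hjoins big_ord_recr.
have rows_l : hjoins = row_joins 0 + \sum_(i < m) row_joins i.+1 by rewrite /hjoins big_ord_recl.
have cols_r : vjoins = \sum_(j < m) col_joins j + col_joins m by rewrite /vjoins big_ord_recr.
have cols_l : vjoins = col_joins 0 + \sum_(j < m) col_joins j.+1 by rewrite /vjoins big_ord_recl.
lia.
Qed.

End Counting.

Lemma leq1_of_sum_leq_card (I : finType) (F : I -> nat) :
  (forall i, 0 < F i) -> \sum_i F i <= #|I| -> forall i, F i <= 1.
Proof.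
move=> F_pos sumF i; move: sumF; rewrite (bigD1 i) //=.
set S := \sum_(j | _) F j.
have : #|I|.-1 <= S by rewrite -(cardC1 i) -sum1_card; apply: leq_sum => j _; exact: F_pos.
have : 0 < #|I| by apply/card_gt0P; exists i.
set N := #|I|; clearbody S N; lia.
Qed.

Section Corners.

Variables (m : nat) (T : {set {set cell m.+2}}).
Hypothesis T_tiling : md_tiling T.

Local Notation R := (same_tile T).

Lemma diagonal_corner_monomer : rim_joins R 0 0 0 m <= 1 ->
  ([set (ord0, ord0)] \in T) || ([set (ord_max, ord_max)] \in T).
Proof.
have := tile_incidence T_tiling (ord0, ord0).
have := tile_incidence T_tiling (ord_max, ord_max).
rewrite /rim_joins /= [hjoin _ m.+1 m.+1]hjoin_out // [vjoin _ m.+1 m.+1]vjoin_out // !add0n.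
by case: ([set _] \in T); case: ([set _] \in T); lia.
Qed.

Lemma antidiagonal_corner_monomer : rim_joins R 0 0 m 0 <= 1 ->
  ([set (ord0, ord_max)] \in T) || ([set (ord_max, ord0)] \in T).
Proof.
have := tile_incidence T_tiling (ord0, ord_max).
have := tile_incidence T_tiling (ord_max, ord0).
rewrite /rim_joins /= [hjoin _ 0 m.+1]hjoin_out // [vjoin _ m.+1 0]vjoin_out // !add0n !addn0.
by case: ([set _] \in T); case: ([set _] \in T); lia.
Qed.

End Corners.

Lemma adjacent_corners m (P : pred (cell m.+2)) :
  P (ord0, ord0) || P (ord_max, ord_max) -> P (ord0, ord_max) || P (ord_max, ord0) ->
  exists c1 c2 : cell m.+2,
    [/\ corner c1, corner c2, c1 != c2, (c1.1 == c2.1) || (c1.2 == c2.2) & P c1 && P c2].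
Proof.
case/orP => P1; case/orP => P2;
  [exists (ord0, ord0), (ord0, ord_max) | exists (ord0, ord0), (ord_max, ord0)
  | exists (ord_max, ord_max), (ord0, ord_max) | exists (ord_max, ord_max), (ord_max, ord0)];
  by rewrite /corner /= P1 P2 !eqxx //= xpair_eqE eqxx -val_eqE.
Qed.

Theorem corollary2 (n : nat) (hn : 2 <= n) (T : {set {set cell n}}) :
  tatami_tiling T -> num_monomers T = n ->
  exists c1 c2 : cell n,
    [/\ corner c1, corner c2, c1 != c2,
        (c1.1 == c2.1) || (c1.2 == c2.2)
      & ([set c1] \in T) && ([set c2] \in T)].
Proof.
case: n hn T => [|[|m]] // _ T [tiling tat] monomers.
have rim_pos (k : 'I_m.+1) : 0 < rim_joins (same_tile T) 0 0 k (m.+1 - k.+1).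
  apply: (rim_joins_pos (same_tile_sym T) (same_tile_partner tiling));
    first exact: same_tile_tatami; by have := ltn_ord k; lia.
have rims : \sum_(k < m.+1) rim_joins (same_tile T) 0 0 k (m.+1 - k.+1) <= #|'I_m.+1|.
  rewrite card_ord rim_joins_sum.
  by have := card_cells_decomp tiling; have := tatami_joins_lb tiling tat; rewrite monomers; nia.
have rim_le1 := leq1_of_sum_leq_card rim_pos rims.
apply: (@adjacent_corners m (fun c => [set c] \in T)).
  by apply: diagonal_corner_monomer tiling _; have := rim_le1 ord0; rewrite /= subn1.
by apply: antidiagonal_corner_monomer tiling _; have := rim_le1 ord_max; rewrite /= subnn.
Qed.
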